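(* For every colored triangulation $(\tau,\xi)$ of $\boldsymbol{\Sigma}$ and for either choice $K=\mathbb{C}$ or $K=\mathbb{R}$, the quotient $K_{\boldsymbol{\sigma}}\widehat{Q}(\tau)/I(\tau,\xi)$, where $I(\tau,\xi)=\langle Z(\tau)\cup\{q_{s_j}\mid s_j\in\mathbb{S}(\tau)\}\rangle$, is a semilinear clannish algebra. That is, the data $(\widehat{Q}(\tau),\mathbb{S}(\tau),(\sigma_a)_a,Z(\tau),(q_{s_j})_j)$ satisfy: (i) at each vertex at most two arrows end and at most two arrows start; (ii) for each arrow $a:k\to j$ not in $\mathbb{S}(\tau)$, at most one arrow $b$ ending at $k$ has $ab\notin Z(\tau)$, and at most one arrow $b$ starting at $j$ has $ba\notin Z(\tau)$; (iii) no path in $Z(\tau)$ has a special loop as its first or last arrow; and each $q_{s_j}$ is a degree-$2$ skew polynomial.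
   Context: Let $\boldsymbol{\Sigma}=(\Sigma,\mathbb{M},\mathbb{O})$ be a surface with marked points and orbifold points: $\Sigma$ a compact connected oriented surface with possibly empty boundary, $\emptyset\neq\mathbb{M}\subseteq\Sigma$ a finite set of marked points meeting every boundary component, and $\mathbb{O}\subseteq\Sigma\setminus\partial\Sigma$ a finite set of orbifold points. Assume either ($\partial\Sigma\neq\emptyset$ and $\mathbb{M}\subseteq\partial\Sigma$) or ($\partial\Sigma=\emptyset$ and $|\mathbb{M}|=1$). Arcs join two points of $\mathbb{M}$ (non-pending) or a point of $\mathbb{M}$ to a point of $\mathbb{O}$ (pending); a triangulation $\tau$ is a maximal collection of pairwise compatible arcs. Let $X_0(\tau)=\tau$, $X_1(\tau)$ the set of arrows joining arcs clockwise inside the triangles of $\tau$, and $X_2(\tau)$ the set of $3$-cycles on $X_1(\tau)$ arising from triangles (up to rotation). A colored triangulation is a pair $(\tau,\xi)$ with $\xi=(\xi_a)_{a\in X_1(\tau)}\in\{0,1\}^{X_1(\tau)}$ such that $\xi_\alpha+\xi_\beta+\xi_\gamma\equiv 0 \pmod 2$ for every $\alpha\beta\gamma\in X_2(\tau)$. Semilinear clannish algebra: given a field $K$, a finite quiver $\widehat{Q}$, a set $\mathbb{S}$ of special loops, automorphisms $\sigma_a\in\operatorname{Aut}(K)$ for each arrow $a$, a set $Z$ of paths of length $\ge2$, and degree-$2$ polynomials $q_s\in K[s;\sigma_s]$ (skew-polynomial ring) for $s\in\mathbb{S}$, satisfying conditions (i)–(iii) above, the quotient $K_{\boldsymbol{\sigma}}\widehat{Q}/\langle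 Z\cup\{q_s\mid s\in\mathbb{S}\}\rangle$ is called semilinear clannish, where $K_{\boldsymbol{\sigma}}\widehat{Q}=T_S(\bigoplus_{a}K^{\sigma_a}\otimes_K K)$, $S=\times_{k\in\widehat{Q}_0}K$, and $K^{\sigma}$ is $K$ with left action $z*m=zm$ and right action $m*z=m\sigma(z)$. Construction: let $\theta$ be complex conjugation. $\widehat{Q}(\tau)$ is the quiver $(X_0(\tau),X_1(\tau))$ with a loop $s_j$ added at each pending arc $j$; $\mathbb{S}(\tau)=\{s_j\mid j \text{ pending}\}$; $\sigma_a=\theta^{\xi_a}|_K$ for $a\in X_1(\tau)$ and $\sigma_a=\theta|_K$ for $a\in\mathbb{S}(\tau)$; $Z(\tau)=\{\alpha\beta\mid \exists\gamma\in X_1(\tau),\ \alpha\beta\gamma\in X_2(\tau)\text{ up to rotation}\}$; $q_{s_j}=s_j^2-1\in\mathbb{C}[s_j;\theta]$ if $K=\mathbb{C}$ and $q_{s_j}=s_j^2+1\in\mathbb{R}[s_j;\mathrm{id}_{\mathbb{R}}]$ if $K=\mathbb{R}$. *)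

From HB Require Import structures.
From mathcomp Require Import all_boot all_order all_algebra.
From mathcomp Require Import complex.
From mathcomp Require Import Rstruct.

Set Implicit Arguments.
Unset Strict Implicit.
Unset Printing Implicit Defensive.

Import GRing.Theory.
Local Open Scope ring_scope.

(* Skew polynomials K[s; sigma], represented by their (left) coefficients.    *)
(* An element sum_i c_i s^i is stored as the coefficient polynomial; the ring *)
(* structure (s * c = sigma(c) * s) is irrelevant for the degree.             *)
Record skewpoly (K : fieldType) (sigma : K -> K) := SkewPoly {
  skew_coefs : {poly K} }.

Definition skew_deg (K : fieldType) (sigma : K -> K) (p : skewpoly sigma) : nat :=
  (size (skew_coefs p)).-1.

Definition is_field_aut (K : fieldType) (f : K -> K) : Prop :=
  [/\ {morph f : x y / x + y}, {morph f : x y / x * y}, f 1 = 1 & bijective f].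

(* Semilinear clannish data: quiver, special loops, automorphisms sigma_a,    *)
(* a set Z of paths (words of arrows; the word [:: a; b] stands for the path  *)
(* "ab", i.e. b followed by a, so that tgt b = src a), and polynomials q_s.    *)
Record sl_clannish_data (K : fieldType) := SLClannishData {
  sc_vert : finType;
  sc_arr : finType;
  sc_src : sc_arr -> sc_vert;
  sc_tgt : sc_arr -> sc_vert;
  sc_special : pred sc_arr;
  sc_sigma : sc_arr -> (K -> K);
  sc_Z : seq sc_arr -> Prop;
  sc_q : forall s : sc_arr, skewpoly (sc_sigma s) }.

Fixpoint is_path (V A : Type) (src tgt : A -> V) (w : seq A) : Prop :=
  match w with
  | [::] => True
  | a :: w' =>
      match w' with
      | [::] => True
      | b :: _ => tgt b = src a /\ is_path src tgt w'
      end
  end.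

Definition is_semilinear_clannish (K : fieldType) (D : sl_clannish_data K) : Prop :=
  let V := sc_vert D in let A := sc_arr D in
  let src := @sc_src K D in let tgt := @sc_tgt K D in
  let S := @sc_special K D in let Z := @sc_Z K D in
  (forall a : A, is_field_aut (sc_sigma a)) /\
  (forall s : A, S s -> src s = tgt s) /\
  (forall w, Z w -> (2 <= size w)%N /\ is_path src tgt w) /\
  (forall v : V, (#|[pred a : A | tgt a == v]| <= 2)%N /\
                 (#|[pred a : A | src a == v]| <= 2)%N) /\
  (forall a : A, ~~ S a ->
     (forall b b' : A, tgt b = src a -> tgt b' = src a ->
        ~ Z [:: a; b] -> ~ Z [:: a; b'] -> b = b') /\
     (forall b b' : A, src b = tgt a -> src b' = tgt a ->
        ~ Z [:: b; a] -> ~ Z [:: b'; a] -> b = b')) /\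
  (forall w, Z w -> forall x0 : A, ~~ S (head x0 w) /\ ~~ S (last x0 w)) /\
  (forall s : A, S s -> skew_deg (sc_q s) = 2%N).

(* Combinatorial model of a triangulation tau of Sigma:        *)
(* a finite set of arcs (some pending), a finite set of triangles, each with  *)
(* three sides listed in clockwise order; a side is an arc (Some x) or a      *)
(* boundary segment (None).  Gluing: every non-pending arc is a side of       *)
(* exactly two triangle-sides, every pending arc of exactly one.              *)
Record triangulation := Triangulation {
  tr_arc : finType;
  tr_pending : pred tr_arc;
  tr_tri : finType;
  tr_side : tr_tri -> 'I_3 -> option tr_arc }.

Definition triangulation_axiom (T : triangulation) : Prop :=
  forall x : tr_arc T,
    #|[pred c : tr_tri T * 'I_3 | tr_side c.1 c.2 == Some x]|
      = (if tr_pending x then 1 else 2)%N.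

(* X_1(tau): arrows inside triangles, from side i to the clockwise next side *)
Definition X1_ok (T : triangulation)
  (p : (tr_tri T * 'I_3) * (tr_arc T * tr_arc T)) : bool :=
  (tr_side p.1.1 p.1.2 == Some p.2.1) && (tr_side p.1.1 (ordS p.1.2) == Some p.2.2).

Definition X1 (T : triangulation) := {p : (tr_tri T * 'I_3) * (tr_arc T * tr_arc T) | X1_ok p}.

(* triangles all of whose sides are arcs: they give the 3-cycles of X_2(tau) *)
Definition full_tri (T : triangulation) (t : tr_tri T) : bool :=
  [forall i : 'I_3, tr_side t i != None].

(* pending arcs, indexing the special loops s_j *)
Definition pend_arc (T : triangulation) := {j : tr_arc T | tr_pending j}.

Definition Qarr (T : triangulation) := (X1 T + pend_arc T)%type.

Definition Qsrc (T : triangulation) (a : Qarr T) : tr_arc T :=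
  match a with inl p => (val p).2.1 | inr j => val j end.
Definition Qtgt (T : triangulation) (a : Qarr T) : tr_arc T :=
  match a with inl p => (val p).2.2 | inr j => val j end.
Definition Qspecial (T : triangulation) : pred (Qarr T) :=
  fun a => if a is inr _ then true else false.

Definition corner_of (T : triangulation) (a : Qarr T) : option (tr_tri T * 'I_3) :=
  match a with inl p => Some (val p).1 | inr _ => None end.

(* Z(tau): paths alpha beta of length 2 with alpha beta gamma in X_2(tau) up to
   rotation, i.e. two consecutive arrows inside a triangle all of whose sides
   are arcs. *)
Definition Ztau (T : triangulation) (w : seq (Qarr T)) : Prop :=
  exists (t : tr_tri T) (i : 'I_3), full_tri t /\
    map (@corner_of T) w = [:: Some (t, ordS i); Some (t, i)].

Definition is_coloring (T : triangulation) (xi : X1 T -> bool) : Prop :=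
  forall t : tr_tri T, full_tri t ->
    forall a b c : X1 T,
      (val a).1 = (t, 0%R) -> (val b).1 = (t, 1%R) -> (val c).1 = (t, 2%R) ->
      xi a (+) xi b (+) xi c = false.

Definition Qsigma (K : fieldType) (theta : K -> K) (T : triangulation)
  (xi : X1 T -> bool) (a : Qarr T) : K -> K :=
  match a with inl p => if xi p then theta else id | inr _ => theta end.

(* q_{s_j} = s_j^2 + c, and 0 (irrelevant) on non-special arrows *)
Definition Qq (K : fieldType) (theta : K -> K) (c : K) (T : triangulation)
  (xi : X1 T -> bool) (a : Qarr T) : skewpoly (Qsigma theta xi a) :=
  SkewPoly (Qsigma theta xi a)
    (match a with inl _ => 0 | inr _ => 'X^2 + c%:P end).

Definition clannish_data_of (K : fieldType) (theta : K -> K) (c : K)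
  (T : triangulation) (xi : X1 T -> bool) : sl_clannish_data K :=
  @SLClannishData K (tr_arc T) (Qarr T) (@Qsrc T) (@Qtgt T) (@Qspecial T)
    (Qsigma theta xi) (@Ztau T) (Qq theta c xi).

Definition RR : rcfType := Rdefinitions.R.
Definition CC : fieldType := (Rdefinitions.R)[i].
Definition conjCC : CC -> CC := @conjc Rdefinitions.R.

(** Every arrow of [Qhat(tau)] other than a special loop sits in a corner of a
    triangle, and is determined by the corner at its source and by the corner at
    its target.  An arc is a side of exactly two corners, or of one corner if it
    is pending, and a pending arc carries one special loop; so each arc has two
    "slots", and the arrows ending (or starting) at it inject into them.  This
    gives (i).  For (ii), the arrow [b] following [a] inside the triangle of [a]
    fills the slot of the corner shared with [a], and then [ab] lies in [Z(tau)]
    because that triangle has three arcs as sides; the other arrows share the one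
    remaining slot. *)

From mathcomp Require Import all_boot all_algebra.
From mathcomp Require Import complex Rstruct.

Set Implicit Arguments.
Unset Strict Implicit.
Unset Printing Implicit Defensive.

Import GRing.Theory.

Lemma id_field_aut (K : fieldType) : is_field_aut (@id K).
Proof. by split=> //; exists id. Qed.

Lemma conjCC_field_aut : is_field_aut conjCC.
Proof.
split; [exact: rmorphD | exact: rmorphM | exact: rmorph1 |].
by exists conjCC; exact: conjcK.
Qed.

Section Triangulation.

Variable T : triangulation.
Hypothesis HT : triangulation_axiom T.

Local Notation corner := (tr_tri T * 'I_3)%type.

Definition corners_at (x : tr_arc T) : {set corner} :=
  [set c | tr_side c.1 c.2 == Some x].

(* [None] is the slot of the special loop at a pending arc. *)
Definition slots (x : tr_arc T) : {set option corner} :=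
  (if tr_pending x then [set None] else set0) :|: Some @: corners_at x.

Lemma card_slots x : #|slots x| = 2.
Proof.
have card_corners : #|corners_at x| = (if tr_pending x then 1 else 2).
  by rewrite -HT cardsE.
rewrite /slots; case: tr_pending card_corners => card_corners.
- rewrite cardsU1 card_imset ?card_corners //; last exact: Some_inj.
  by suff -> : None \notin Some @: corners_at x by []; apply/imsetP => -[].
- by rewrite /= set0U card_imset ?card_corners //; exact: Some_inj.
Qed.

Definition src_corner (p : X1 T) : corner := (val p).1.
Definition tgt_corner (p : X1 T) : corner := ((val p).1.1, ordS (val p).1.2).

Lemma side_src_corner p :
  tr_side (src_corner p).1 (src_corner p).2 = Some (Qsrc (inl p)).
Proof. by case: p => [[[t i] [x y]] /= /andP [/eqP]]. Qed.

Lemma side_tgt_corner p :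
  tr_side (tgt_corner p).1 (tgt_corner p).2 = Some (Qtgt (inl p)).
Proof. by case: p => [[[t i] [x y]] /= /andP [_ /eqP]]. Qed.

Lemma src_corner_inj : injective src_corner.
Proof.
move=> [[c [x y]] ok] [[c' [x' y']] ok']; rewrite /src_corner /= => eq_c.
apply: val_inj => /=.
move: ok ok'; rewrite /X1_ok /= -eq_c.
by move=> /andP [/eqP -> /eqP ->] /andP [/eqP [->] /eqP [->]]; rewrite eq_c.
Qed.

Lemma tgt_corner_inj : injective tgt_corner.
Proof.
move=> p q eq_pq; apply: src_corner_inj.
have [eq_t eq_i] :
  (tgt_corner p).1 = (tgt_corner q).1 /\ (tgt_corner p).2 = (tgt_corner q).2.
  by rewrite eq_pq.
rewrite /src_corner [(val p).1]surjective_pairing [(val q).1]surjective_pairing.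
by move: eq_t eq_i => /= -> /ordS_inj ->.
Qed.

Lemma Some_corner_in_slots x c : c \in corners_at x -> Some c \in slots x.
Proof. by move=> c_x; apply/setUP; right; exact: imset_f. Qed.

Section ArrowEnd.

Variables (endpt : Qarr T -> tr_arc T) (end_corner : X1 T -> corner).
Hypothesis end_corner_inj : injective end_corner.
Hypothesis side_end_corner :
  forall p, tr_side (end_corner p).1 (end_corner p).2 = Some (endpt (inl p)).
Hypothesis endpt_loop : forall j, endpt (inr j) = val j.

Definition end_slot (a : Qarr T) : option corner :=
  if a is inl p then Some (end_corner p) else None.

Lemma end_slot_in_slots a : end_slot a \in slots (endpt a).
Proof.
case: a => [p | j] /=.
- by apply: Some_corner_in_slots; rewrite inE side_end_corner.
- by rewrite endpt_loop /slots (valP j : tr_pending (val j)) !inE.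
Qed.

Lemma end_slot_inj x : {in [pred a | endpt a == x] &, injective end_slot}.
Proof.
move=> [p | j] [q | k] //=; rewrite !inE; first by move=> _ _ [/end_corner_inj ->].
by rewrite !endpt_loop => /eqP <- /eqP /val_inj ->.
Qed.

Lemma card_arrows_at x : #|[pred a | endpt a == x]| <= 2.
Proof.
rewrite -(card_in_imset (@end_slot_inj x)) -[leqRHS](card_slots x).
apply/subset_leq_card/subsetP => _ /imsetP [a /eqP <- ->].
exact: end_slot_in_slots.
Qed.

Lemma arrow_at_off_corner_unique x c b b' : c \in corners_at x ->
  endpt b = x -> endpt b' = x -> end_slot b != Some c -> end_slot b' != Some c ->
  b = b'.
Proof.
move=> c_x b_x b'_x b_c b'_c; apply: (@end_slot_inj x); rewrite ?inE ?b_x ?b'_x //.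
have card_rest : #|slots x :\ Some c| <= 1.
  move: (card_slots x).
  by rewrite (cardsD1 (Some c)) Some_corner_in_slots // add1n => -[->].
have slot_b : end_slot b \in slots x :\ Some c.
  by rewrite in_setD1 b_c -b_x end_slot_in_slots.
have slot_b' : end_slot b' \in slots x :\ Some c.
  by rewrite in_setD1 b'_c -b'_x end_slot_in_slots.
exact: (card_le1_eqP card_rest).
Qed.

End ArrowEnd.

Lemma full_tri_of_sides (t : tr_tri T) (i : 'I_3) : tr_side t i != None ->
  tr_side t (ordS i) != None -> tr_side t (ordS (ordS i)) != None -> full_tri t.
Proof.
move=> si sSi sSSi; apply/forallP => k; have : k \in [:: i; ordS i; ordS (ordS i)].
  by case: i {si sSi sSSi} k => [[|[|[|//]]] ?] [[|[|[|//]]] ?].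
by rewrite !inE => /or3P [] /eqP ->.
Qed.

Lemma full_tri_of_consecutive p q :
  tgt_corner q = src_corner p -> full_tri (src_corner q).1.
Proof.
move=> qp; have sSSq := side_tgt_corner p.
rewrite /tgt_corner -/(src_corner p) -qp /= in sSSq.
apply: (@full_tri_of_sides _ (src_corner q).2).
- by have := side_src_corner q; rewrite /src_corner => ->.
- by rewrite side_tgt_corner.
- by rewrite sSSq.
Qed.

Lemma ZtauP w :
  Ztau w <-> exists p q, w = [:: inl p; inl q] /\ tgt_corner q = src_corner p.
Proof.
split.
- move=> [t [i [_]]]; case: w => [|[p|?] [|[q|?] [|? ?]]] //= [sp sq].
  by exists p, q; split => //; rewrite /tgt_corner /src_corner sq sp.
- move=> [p [q [-> qp]]]; exists (src_corner q).1, (src_corner q).2.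
  split; first exact: full_tri_of_consecutive qp.
  by rewrite /= -surjective_pairing; congr [:: Some _; _]; exact: esym qp.
Qed.

Lemma consecutive_arrows_compose p q :
  tgt_corner q = src_corner p -> Qtgt (inl q) = Qsrc (inl p).
Proof.
by move=> qp; apply: Some_inj; rewrite -side_tgt_corner -side_src_corner qp.
Qed.

Lemma arrow_into_src_unique (p : X1 T) (b b' : Qarr T) :
  Qtgt b = Qsrc (inl p) -> Qtgt b' = Qsrc (inl p) ->
  ~ Ztau [:: inl p; b] -> ~ Ztau [:: inl p; b'] -> b = b'.
Proof.
have off_corner (b1 : Qarr T) : ~ Ztau [:: inl p; b1] ->
    end_slot tgt_corner b1 != Some (src_corner p).
  by case: b1 => // q nZ; apply/eqP => -[qp]; apply: nZ; apply/ZtauP; exists p, q.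
move=> b_p b'_p /off_corner b_c /off_corner b'_c.
have c_x : src_corner p \in corners_at (Qsrc (inl p)) by rewrite inE side_src_corner.
exact: (arrow_at_off_corner_unique tgt_corner_inj side_tgt_corner (fun _ => erefl)
          c_x b_p b'_p b_c b'_c).
Qed.

Lemma arrow_out_of_tgt_unique (p : X1 T) (b b' : Qarr T) :
  Qsrc b = Qtgt (inl p) -> Qsrc b' = Qtgt (inl p) ->
  ~ Ztau [:: b; inl p] -> ~ Ztau [:: b'; inl p] -> b = b'.
Proof.
have off_corner (b1 : Qarr T) : ~ Ztau [:: b1; inl p] ->
    end_slot src_corner b1 != Some (tgt_corner p).
  by case: b1 => // q nZ; apply/eqP => -[pq]; apply: nZ; apply/ZtauP; exists q, p.
move=> b_p b'_p /off_corner b_c /off_corner b'_c.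
have c_x : tgt_corner p \in corners_at (Qtgt (inl p)) by rewrite inE side_tgt_corner.
exact: (arrow_at_off_corner_unique src_corner_inj side_src_corner (fun _ => erefl)
          c_x b_p b'_p b_c b'_c).
Qed.

End Triangulation.

Theorem clannish_data_of_is_semilinear_clannish (K : fieldType) (theta : K -> K)
    (c : K) (T : triangulation) (xi : X1 T -> bool) :
  is_field_aut theta -> triangulation_axiom T ->
  is_semilinear_clannish (clannish_data_of theta c xi).
Proof.
move=> theta_aut HT; split.
  by case=> [p|j] //=; case: (xi p); last exact: id_field_aut.
split; first by case.
split.
  move=> w /ZtauP [p [q [-> qp]]]; split => //=; split => //.
  exact: consecutive_arrows_compose.
split.
  move=> v; split.
  - exact (card_arrows_at HT (@tgt_corner_inj T) (@side_tgt_corner T)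
             (fun _ => erefl) v).
  - exact (card_arrows_at HT (@src_corner_inj T) (@side_src_corner T)
             (fun _ => erefl) v).
split.
  case=> // p _.
  by split; [exact: arrow_into_src_unique | exact: arrow_out_of_tgt_unique].
split; first by move=> w /ZtauP [p [q [-> _]]].
by case=> // j _; rewrite /skew_deg /= size_XnaddC.
Qed.

Local Open Scope ring_scope.

Theorem mainTheorem1 :
  forall (T : triangulation) (xi : X1 T -> bool),
    triangulation_axiom T -> is_coloring xi ->
    is_semilinear_clannish (clannish_data_of conjCC (-1) xi) /\
    is_semilinear_clannish (clannish_data_of (@id RR) 1 xi).
Proof.
move=> T xi HT _; split.
- exact: (clannish_data_of_is_semilinear_clannish _ _ conjCC_field_aut HT).
- exact: (clannish_data_of_is_semilinear_clannish _ _ (@id_field_aut RR) HT).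
Qed.
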